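(* Let $f,g\colon\mathbb{R}\to\mathbb{R}$ be smooth $T$-periodic functions ($T>0$) with $\frac1T\int_0^Tg(t)\,dt=0$. Then there exists $\lambda_0$ such that for every $\lambda\geqslant\lambda_0$ with $\lambda\in\mathbb{N}$, the equation $$\ddot x=f(t)\sin x-(1+g(\lambda t))\cos x$$ has a $T$-periodic solution $x(t)$ with $x(t)\in(0,\pi)$ for all $t$.
   Context: The equation describes an inverted pendulum with a horizontally moving pivot point in a gravity field oscillating as $1+g(\lambda t)$. *)

From Stdlib Require Import Reals.
Open Scope R_scope.

Definition smooth (f : R -> R) : Prop :=
  exists D : nat -> R -> R,
    (forall t, D O t = f t) /\
    (forall (n : nat) (t : R), derivable_pt_lim (D n) t (D (S n) t)).

Definition periodic (T : R) (f : R -> R) : Prop :=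
  forall t, f (t + T) = f t.

Definition is_solution (F : R -> R -> R) (x : R -> R) : Prop :=
  exists x' : R -> R,
    (forall t, derivable_pt_lim x t (x' t)) /\
    (forall t, derivable_pt_lim x' t (F t (x t))).

From Stdlib Require Import Reals ZArith Lra Lia Psatz.
From Coquelicot Require Import Coquelicot.
Open Scope R_scope.

(* Let H be a T-periodic second primitive of g (it exists because g has mean
   zero) and r = lambda.  For a small delta, depending only on the bounds of
   f and g, the functions
     alpha t = delta - H (r t) / r^2,    beta t = PI - delta + H (r t) / r^2
   satisfy alpha'' = - g (r t) and beta'' = g (r t), which cancel the fast
   forcing - g (r t) cos x up to a term g (r t) (1 - cos delta) = O (delta^2);
   since cos dominates near 0 they are a lower and an upper solution as soon as
   |H| / r^2 <= delta / 2.  The method of lower and upper solutions then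
   yields a T-periodic solution between alpha and beta, hence in (0, PI): the
   iteration x |-> G (k^2 x - F (t, x)), with G the periodic Green operator of
   x'' - k^2 x and k^2 larger than the Lipschitz constant of F, is monotone by
   the maximum principle, and its iterates from alpha increase to a fixed
   point. *)

(** * Periodic functions and a maximum principle *)

Lemma periodic_shift_nat T (phi : R -> R) :
  periodic T phi -> forall m t, phi (t + INR m * T) = phi t.
Proof.
  intros Hp m; induction m as [|m IH]; intro t.
  - simpl; f_equal; ring.
  - rewrite S_INR, <- (IH t), <- (Hp (t + INR m * T)); f_equal; ring.
Qed.

Lemma periodic_shift_Z T (phi : R -> R) :
  periodic T phi -> forall z t, phi (t + IZR z * T) = phi t.
Proof.
  intros Hp z t; destruct z as [|p|p].
  - f_equal; simpl; ring.
  - rewrite <- positive_nat_Z, <- INR_IZR_INZ; apply periodic_shift_nat, Hp.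
  - rewrite <- Pos2Z.opp_pos, opp_IZR, <- positive_nat_Z, <- INR_IZR_INZ.
    rewrite <- (periodic_shift_nat T phi Hp (Pos.to_nat p)); f_equal; ring.
Qed.

Lemma periodic_reduce T (phi : R -> R) :
  0 < T -> periodic T phi -> forall t, exists t', 0 <= t' <= T /\ phi t = phi t'.
Proof.
  intros HT Hp t; destruct (base_Int_part (t / T)) as [Hlo Hhi].
  exists (t + IZR (- Int_part (t / T)) * T); split.
  - rewrite opp_IZR.
    assert (E : t = t / T * T) by (field; lra).
    split; rewrite E at 1; nra.
  - symmetry; apply periodic_shift_Z, Hp.
Qed.

Lemma periodic_bounded T (phi : R -> R) : 0 < T -> periodic T phi ->
  (forall t, continuity_pt phi t) -> exists M, forall t, Rabs (phi t) <= M.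
Proof.
  intros HT Hp Hc.
  destruct (continuity_ab_maj (fun t => Rabs (phi t)) 0 T) as [tm [Htm _]].
  - lra.
  - intros t _; apply (continuity_pt_comp phi Rabs); [apply Hc | apply Rcontinuity_abs].
  - exists (Rabs (phi tm)); intro t.
    destruct (periodic_reduce T phi HT Hp t) as [t' [Ht' ->]]; apply Htm, Ht'.
Qed.

Lemma bound_nonneg (phi : R -> R) M : (forall t, Rabs (phi t) <= M) -> 0 <= M.
Proof. intro HM; pose proof (HM 0); pose proof (Rabs_pos (phi 0)); lra. Qed.

Lemma derivable_pt_lim_continuity (phi dphi : R -> R) :
  (forall t, derivable_pt_lim phi t (dphi t)) -> forall t, continuity_pt phi t.
Proof. intros H t; apply derivable_continuous_pt; exists (dphi t); apply H. Qed.

(* If w'' t0 < 0, then w' decreases strictly through t0, so by the mean value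
   theorem w (t0 + d/2) < w t0 if w' t0 <= 0, and w (t0 - d/2) < w t0 otherwise. *)
Lemma deriv2_ge0_at_min (w w' w'' : R -> R) t0 :
  (forall t, derivable_pt_lim w t (w' t)) -> derivable_pt_lim w' t0 (w'' t0) ->
  (forall s, w t0 <= w s) -> 0 <= w'' t0.
Proof.
  intros Hw Hw' Hmin.
  destruct (Rle_or_lt 0 (w'' t0)) as [|Hneg]; [assumption | exfalso].
  destruct (Hw' (- w'' t0 / 2)) as [[d Hd] Hq]; [lra|]; simpl in Hq.
  assert (Hslope : forall h, h <> 0 -> Rabs h < d ->
             (w' (t0 + h) - w' t0) / h < w'' t0 / 2).
  { intros h H0 Hh; specialize (Hq h H0 Hh); apply Rabs_def2 in Hq; lra. }
  assert (Hquot : forall h, h <> 0 -> w' (t0 + h) - w' t0 = (w' (t0 + h) - w' t0) / h * h)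
    by (intros; field; assumption).
  destruct (Rle_or_lt (w' t0) 0) as [Hs|Hs].
  - destruct (MVT_cor2 w w' t0 (t0 + d / 2)) as [c [Ec Hc]]; [lra | intros; apply Hw |].
    pose proof (Hslope (c - t0)) as Hc'; pose proof (Hquot (c - t0)) as Ec'.
    replace (t0 + (c - t0)) with c in Hc', Ec' by ring.
    rewrite Rabs_right in Hc' by lra.
    specialize (Hc' ltac:(lra) ltac:(lra)); specialize (Ec' ltac:(lra)).
    assert (w' c < 0) by nra.
    specialize (Hmin (t0 + d / 2)); nra.
  - destruct (MVT_cor2 w w' (t0 - d / 2) t0) as [c [Ec Hc]]; [lra | intros; apply Hw |].
    pose proof (Hslope (c - t0)) as Hc'; pose proof (Hquot (c - t0)) as Ec'.
    replace (t0 + (c - t0)) with c in Hc', Ec' by ring.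
    rewrite Rabs_left in Hc' by lra.
    specialize (Hc' ltac:(lra) ltac:(lra)); specialize (Ec' ltac:(lra)).
    assert (0 < w' c) by nra.
    specialize (Hmin (t0 - d / 2)); nra.
Qed.

Lemma periodic_maximum_principle T K (w w' w'' : R -> R) :
  0 < T -> 0 < K -> periodic T w ->
  (forall t, derivable_pt_lim w t (w' t)) -> (forall t, derivable_pt_lim w' t (w'' t)) ->
  (forall t, w'' t <= K * w t) -> forall t, 0 <= w t.
Proof.
  intros HT HK Hp Hw Hw' Hle t.
  destruct (continuity_ab_min w 0 T) as [t0 [Ht0 _]];
    [lra | intros; apply (derivable_pt_lim_continuity w w' Hw) |].
  assert (Hmin : forall s, w t0 <= w s).
  { intro s; destruct (periodic_reduce T w HT Hp s) as [s' [Hs' ->]]; apply Ht0, Hs'. }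
  pose proof (deriv2_ge0_at_min w w' w'' t0 Hw (Hw' t0) Hmin).
  specialize (Hle t0); specialize (Hmin t); nra.
Qed.

(** * Integrals over sliding windows *)

Lemma continuous_of_continuity_pt (phi : R -> R) :
  (forall t, continuity_pt phi t) -> forall t, continuous phi t.
Proof. intros H t; apply continuity_pt_filterlim, H. Qed.

Lemma ex_RInt_of_continuous (phi : R -> R) :
  (forall t, continuous phi t) -> forall a b, ex_RInt phi a b.
Proof. intros Hc a b; apply (@ex_RInt_continuous R_CompleteNormedModule); auto. Qed.

Lemma RInt_from_0 (phi : R -> R) : (forall t, continuous phi t) ->
  forall a b, RInt phi a b = RInt phi 0 b - RInt phi 0 a.
Proof.
  intros Hc a b.
  assert (E : plus (RInt phi 0 a) (RInt phi a b) = RInt phi 0 b)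
    by (apply RInt_Chasles; apply ex_RInt_of_continuous, Hc).
  unfold plus in E; simpl in E; lra.
Qed.

Lemma is_derive_primitive (phi : R -> R) : (forall t, continuous phi t) ->
  forall x, is_derive (fun x => RInt phi 0 x) x (phi x).
Proof.
  intros Hc x; apply is_derive_RInt with (a := 0); [|apply Hc].
  apply filter_forall; intro y; apply RInt_correct, ex_RInt_of_continuous, Hc.
Qed.

Lemma is_derive_RInt_sliding (phi : R -> R) a b : (forall t, continuous phi t) ->
  forall t, is_derive (fun t => RInt phi (t + a) (t + b)) t (phi (t + b) - phi (t + a)).
Proof.
  intros Hc t.
  apply is_derive_ext with (f := fun t => RInt phi 0 (t + b) - RInt phi 0 (t + a)).
  { intro u; symmetry; apply RInt_from_0, Hc. }
  assert (Hshift : forall c, is_derive (fun t => RInt phi 0 (t + c)) t (phi (t + c))).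
  { intro c; rewrite <- (Rmult_1_l (phi (t + c))).
    apply (is_derive_comp (fun x => RInt phi 0 x) (fun t => t + c)).
    - apply is_derive_primitive, Hc.
    - auto_derive; auto. }
  apply (is_derive_minus _ _ t _ _ (Hshift b) (Hshift a)).
Qed.

Lemma RInt_shift_mult (phi : R -> R) T c a b : (forall t, continuous phi t) ->
  (forall y, phi (y + T) = c * phi y) -> RInt phi (a + T) (b + T) = c * RInt phi a b.
Proof.
  intros Hc Hs.
  rewrite <- (Rmult_1_l a), <- (Rmult_1_l b), <- RInt_comp_lin
    by (apply ex_RInt_of_continuous, Hc).
  rewrite !Rmult_1_l.
  transitivity (RInt (fun y => scal c (phi y)) a b).
  - apply RInt_ext; intros x _; unfold scal; simpl; unfold mult; simpl.
    rewrite !Rmult_1_l, Hs; reflexivity.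
  - apply (RInt_scal phi a b c), ex_RInt_of_continuous, Hc.
Qed.

Lemma continuous_exp_mult c (v : R -> R) : (forall t, continuity_pt v t) ->
  forall t, continuous (fun s => exp (c * s) * v s) t.
Proof.
  intros Hv; apply continuous_of_continuity_pt; intro t.
  apply continuity_pt_mult; [|apply Hv].
  apply derivable_continuous_pt; exists (c * exp (c * t)).
  apply is_derive_Reals; auto_derive; auto; ring.
Qed.

Definition exp_window (c a b : R) (v : R -> R) (t : R) : R :=
  exp (- (c * t)) * RInt (fun s => exp (c * s) * v s) (t + a) (t + b).

Section ExpWindow.
Variables (c a b : R).

Lemma exp_window_derive (v : R -> R) : (forall t, continuity_pt v t) ->
  forall t, is_derive (exp_window c a b v) t
    (- c * exp_window c a b v t + (exp (c * b) * v (t + b) - exp (c * a) * v (t + a))).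
Proof.
  intros Hv t.
  assert (HW := is_derive_RInt_sliding _ a b (continuous_exp_mult c v Hv) t).
  assert (HE : is_derive (fun t => exp (- (c * t))) t (- c * exp (- (c * t))))
    by (auto_derive; auto; ring).
  assert (Hexp : forall d, exp (- (c * t)) * exp (c * (t + d)) = exp (c * d))
    by (intro d; rewrite <- exp_plus; f_equal; ring).
  unfold exp_window.
  replace (exp (c * b) * v (t + b) - exp (c * a) * v (t + a)) with
    (exp (- (c * t)) * (exp (c * (t + b)) * v (t + b) - exp (c * (t + a)) * v (t + a)))
    by (rewrite <- (Hexp a), <- (Hexp b); ring).
  rewrite <- Rmult_assoc.
  apply (is_derive_mult _ _ t _ _ HE HW); intros; apply Rmult_comm.
Qed.

Lemma exp_window_periodic T (v : R -> R) : (forall t, continuity_pt v t) ->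
  periodic T v -> periodic T (exp_window c a b v).
Proof.
  intros Hv Hp t; unfold exp_window.
  replace (t + T + a) with (t + a + T) by ring; replace (t + T + b) with (t + b + T) by ring.
  rewrite (RInt_shift_mult _ T (exp (c * T))); [| apply continuous_exp_mult, Hv |].
  - replace (- (c * (t + T))) with (- (c * t) + - (c * T)) by ring.
    assert (Hinv : exp (- (c * T)) * exp (c * T) = 1)
      by (rewrite <- exp_plus, <- exp_0; f_equal; ring).
    rewrite exp_plus; transitivity (exp (- (c * t)) * (exp (- (c * T)) * exp (c * T)) *
      RInt (fun s => exp (c * s) * v s) (t + a) (t + b)); [ring | rewrite Hinv; ring].
  - intro y; rewrite Hp, Rmult_plus_distr_l, exp_plus; ring.
Qed.

Lemma exp_window_minus (v1 v2 : R -> R) t :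
  (forall s, continuity_pt v1 s) -> (forall s, continuity_pt v2 s) ->
  exp_window c a b (fun s => v1 s - v2 s) t = exp_window c a b v1 t - exp_window c a b v2 t.
Proof.
  intros H1 H2; unfold exp_window; rewrite <- Rmult_minus_distr_l; f_equal.
  transitivity (RInt (fun s => minus (exp (c * s) * v1 s) (exp (c * s) * v2 s)) (t + a) (t + b)).
  - apply RInt_ext; intros; unfold minus, plus, opp; simpl; ring.
  - apply (@RInt_minus R_CompleteNormedModule); apply ex_RInt_of_continuous;
      apply continuous_exp_mult; assumption.
Qed.

Lemma exp_window_bound (v : R -> R) t V : a <= b -> c * a <= 0 -> c * b <= 0 ->
  (forall s, continuity_pt v s) ->
  (forall s, t + a <= s <= t + b -> Rabs (v s) <= V) ->
  Rabs (exp_window c a b v t) <= (b - a) * V.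
Proof.
  intros Hab Hca Hcb Hv HV; unfold exp_window.
  rewrite Rabs_mult, (Rabs_pos_eq (exp _)) by (left; apply exp_pos).
  assert (Hinv : exp (- (c * t)) * exp (c * t) = 1)
    by (rewrite <- exp_plus, <- exp_0; f_equal; ring).
  assert (HI : Rabs (RInt (fun s => exp (c * s) * v s) (t + a) (t + b))
               <= (t + b - (t + a)) * (exp (c * t) * V)).
  { apply abs_RInt_le_const; [lra | apply ex_RInt_of_continuous, continuous_exp_mult, Hv |].
    intros s Hs; rewrite Rabs_mult, (Rabs_pos_eq (exp _)) by (left; apply exp_pos).
    assert (exp (c * s) <= exp (c * t)).
    { replace (c * s) with (c * t + c * (s - t)) by ring; rewrite exp_plus.
      assert (Hneg : c * (s - t) <= 0) by (destruct (Rle_or_lt 0 c); nra).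
      assert (exp (c * (s - t)) <= 1).
      { rewrite <- exp_0; destruct (Rle_lt_or_eq_dec _ _ Hneg) as [Hlt | ->];
          [left; apply exp_increasing, Hlt | right; reflexivity]. }
      pose proof (exp_pos (c * t)); nra. }
    pose proof (HV s Hs); pose proof (Rabs_pos (v s)); pose proof (exp_pos (c * s)); nra. }
  pose proof (exp_pos (- (c * t))).
  apply Rle_trans with (exp (- (c * t)) * ((t + b - (t + a)) * (exp (c * t) * V))).
  - apply Rmult_le_compat_l; lra.
  - right; transitivity ((exp (- (c * t)) * exp (c * t)) * (b - a) * V); [ring|].
    rewrite Hinv; ring.
Qed.

End ExpWindow.

(** * Primitives of periodic functions *)

Lemma derivable_pt_lim_RInt_0 (phi : R -> R) : (forall t, continuity_pt phi t) ->
  forall t, derivable_pt_lim (fun x => RInt phi 0 x) t (phi t).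
Proof.
  intros Hc t; apply is_derive_Reals.
  apply (is_derive_primitive phi (continuous_of_continuity_pt phi Hc)).
Qed.

Lemma primitive_periodic T (phi : R -> R) : (forall t, continuity_pt phi t) -> periodic T phi ->
  RInt phi 0 T = 0 -> periodic T (fun x => RInt phi 0 x).
Proof.
  intros Hc Hp H0 t; cbv beta.
  assert (Hc' := continuous_of_continuity_pt phi Hc).
  assert (Hslide : forall s, derivable_pt_lim (fun s => RInt phi (s + 0) (s + T)) s 0).
  { intro s; apply is_derive_Reals.
    pose proof (is_derive_RInt_sliding phi 0 T Hc' s) as D.
    replace (phi (s + T) - phi (s + 0)) with 0 in D by (rewrite Rplus_0_r, Hp; ring).
    exact D. }
  destruct (MVT_abs (fun s => RInt phi (s + 0) (s + T)) (fun _ => 0) 0 t) as [c [E _]];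
    [intros; apply Hslide|].
  rewrite Rabs_R0, Rmult_0_l in E; apply Rabs_eq_0 in E.
  rewrite !Rplus_0_l, Rplus_0_r, H0, (RInt_from_0 phi Hc' t) in E; lra.
Qed.

Lemma periodic_second_primitive T (g : R -> R) : 0 < T -> (forall t, continuity_pt g t) ->
  periodic T g -> RInt g 0 T = 0 ->
  exists H dH : R -> R, (forall t, derivable_pt_lim H t (dH t)) /\
    (forall t, derivable_pt_lim dH t (g t)) /\ periodic T H.
Proof.
  intros HT Hc Hp H0.
  set (G := fun x => RInt g 0 x).
  assert (HG : forall t, derivable_pt_lim G t (g t)) by (apply derivable_pt_lim_RInt_0, Hc).
  assert (HGp : periodic T G) by (apply primitive_periodic; assumption).
  set (G0 := fun x => G x - RInt G 0 T / T).
  assert (HG0 : forall t, derivable_pt_lim G0 t (g t)).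
  { intro t; rewrite <- Rminus_0_r; apply derivable_pt_lim_minus;
      [apply HG | apply derivable_pt_lim_const]. }
  assert (HG0c := derivable_pt_lim_continuity G0 g HG0).
  assert (HG0p : periodic T G0) by (intro t; unfold G0; rewrite HGp; reflexivity).
  assert (HG0mean : RInt G0 0 T = 0).
  { unfold G0; change (RInt (fun x => minus (G x) (RInt G 0 T / T)) 0 T = 0).
    rewrite (@RInt_minus R_CompleteNormedModule), (@RInt_const R_CompleteNormedModule).
    - unfold minus, plus, opp, scal; simpl; unfold mult; simpl; field; lra.
    - apply ex_RInt_of_continuous, continuous_of_continuity_pt,
        (derivable_pt_lim_continuity G g HG).
    - apply ex_RInt_of_continuous; intro; apply continuous_const. }
  exists (fun x => RInt G0 0 x), G0; split; [|split].
  - apply derivable_pt_lim_RInt_0, HG0c.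
  - exact HG0.
  - apply primitive_periodic; assumption.
Qed.

(** * The periodic Green operator of x'' - k^2 x *)

(* For k > 0 and continuous T-periodic v, [green k T v] is the T-periodic
   solution of x'' = k^2 x - v (the convolution of v with the periodic Green
   function); [dgreen k T v] is its derivative. *)
Definition green (k T : R) (v : R -> R) (t : R) : R :=
  (exp_window k (- T) 0 v t + exp_window (- k) 0 T v t) / (2 * k * (1 - exp (- (k * T)))).

Definition dgreen (k T : R) (v : R -> R) (t : R) : R :=
  (exp_window (- k) 0 T v t - exp_window k (- T) 0 v t) / (2 * (1 - exp (- (k * T)))).

Section Green.
Variables (k T : R).
Hypotheses (Hk : 0 < k) (HT : 0 < T).

Let e := exp (- (k * T)).

Lemma one_minus_exp_pos : 0 < 1 - e.
Proof.
  unfold e; rewrite <- exp_0.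
  assert (exp (- (k * T)) < exp 0) by (apply exp_increasing; nra); lra.
Qed.

Section Periodic.
Variable v : R -> R.
Hypotheses (Hv : forall t, continuity_pt v t) (Hp : periodic T v).

Lemma exp_window_left_derive t :
  is_derive (exp_window k (- T) 0 v) t (- k * exp_window k (- T) 0 v t + (1 - e) * v t).
Proof.
  assert (Hper : v (t + - T) = v t) by (rewrite <- (Hp (t + - T)); f_equal; ring).
  pose proof (exp_window_derive k (- T) 0 v Hv t) as H.
  rewrite Rplus_0_r, Hper, Rmult_0_r, exp_0 in H.
  unfold e; replace (k * - T) with (- (k * T)) in H by ring.
  replace (_ + (1 - _) * _) with
    (- k * exp_window k (- T) 0 v t + (1 * v t - exp (- (k * T)) * v t)) by ring; exact H.
Qed.

Lemma exp_window_right_derive t :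
  is_derive (exp_window (- k) 0 T v) t (k * exp_window (- k) 0 T v t - (1 - e) * v t).
Proof.
  pose proof (exp_window_derive (- k) 0 T v Hv t) as H.
  rewrite Rplus_0_r, Hp, Rmult_0_r, exp_0 in H.
  unfold e; replace (- k * T) with (- (k * T)) in H by ring.
  replace (_ - (1 - _) * _) with
    (- - k * exp_window (- k) 0 T v t + (exp (- (k * T)) * v t - 1 * v t)) by ring; exact H.
Qed.

Lemma green_derive t : derivable_pt_lim (green k T v) t (dgreen k T v t).
Proof.
  pose proof one_minus_exp_pos as He; apply is_derive_Reals.
  pose proof (is_derive_plus _ _ t _ _ (exp_window_left_derive t) (exp_window_right_derive t)) as H.
  pose proof (is_derive_scal _ t (/ (2 * k * (1 - e))) _ H) as H2.
  unfold green, dgreen; fold e.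
  replace (_ / (2 * (1 - e))) with
    (/ (2 * k * (1 - e)) * ((- k * exp_window k (- T) 0 v t + (1 - e) * v t) +
                            (k * exp_window (- k) 0 T v t - (1 - e) * v t)))
    by (field; split; lra).
  eapply is_derive_ext; [|exact H2]; intro s; unfold plus; simpl; unfold Rdiv; ring.
Qed.

Lemma dgreen_derive t : derivable_pt_lim (dgreen k T v) t (k ^ 2 * green k T v t - v t).
Proof.
  pose proof one_minus_exp_pos as He; apply is_derive_Reals.
  pose proof (is_derive_minus _ _ t _ _
                (exp_window_right_derive t) (exp_window_left_derive t)) as H.
  pose proof (is_derive_scal _ t (/ (2 * (1 - e))) _ H) as H2.
  unfold green, dgreen; fold e.
  replace (_ - v t) with
    (/ (2 * (1 - e)) * ((k * exp_window (- k) 0 T v t - (1 - e) * v t) -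
                        (- k * exp_window k (- T) 0 v t + (1 - e) * v t)))
    by (field; split; lra).
  eapply is_derive_ext; [|exact H2]; intro s; unfold minus, plus, opp; simpl; unfold Rdiv; ring.
Qed.

Lemma green_periodic : periodic T (green k T v).
Proof.
  intro t; unfold green.
  rewrite (exp_window_periodic k (- T) 0 T v Hv Hp t),
          (exp_window_periodic (- k) 0 T T v Hv Hp t); reflexivity.
Qed.

Lemma green_ge (u du ddu : R -> R) :
  periodic T u -> (forall t, derivable_pt_lim u t (du t)) ->
  (forall t, derivable_pt_lim du t (ddu t)) ->
  (forall t, k ^ 2 * u t - ddu t <= v t) -> forall t, u t <= green k T v t.
Proof.
  intros Hup Hu Hdu Hsub t.
  enough (0 <= green k T v t - u t) by lra.
  apply (periodic_maximum_principle T (k ^ 2) (fun t => green k T v t - u t)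
           (fun t => dgreen k T v t - du t)
           (fun t => (k ^ 2 * green k T v t - v t) - ddu t)); try nra.
  - intro s; cbv beta; rewrite green_periodic, Hup; reflexivity.
  - intro s; apply derivable_pt_lim_minus; [apply green_derive | apply Hu].
  - intro s; apply derivable_pt_lim_minus; [apply dgreen_derive | apply Hdu].
  - intro s; specialize (Hsub s); lra.
Qed.

Lemma green_le (u du ddu : R -> R) :
  periodic T u -> (forall t, derivable_pt_lim u t (du t)) ->
  (forall t, derivable_pt_lim du t (ddu t)) ->
  (forall t, v t <= k ^ 2 * u t - ddu t) -> forall t, green k T v t <= u t.
Proof.
  intros Hup Hu Hdu Hsup t.
  enough (0 <= u t - green k T v t) by lra.
  apply (periodic_maximum_principle T (k ^ 2) (fun t => u t - green k T v t)
           (fun t => du t - dgreen k T v t)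
           (fun t => ddu t - (k ^ 2 * green k T v t - v t))); try nra.
  - intro s; cbv beta; rewrite green_periodic, Hup; reflexivity.
  - intro s; apply derivable_pt_lim_minus; [apply Hu | apply green_derive].
  - intro s; apply derivable_pt_lim_minus; [apply Hdu | apply dgreen_derive].
  - intro s; specialize (Hsup s); lra.
Qed.

End Periodic.

Lemma exp_windows_bound (v : R -> R) t V : (forall s, continuity_pt v s) ->
  (forall s, t - T <= s <= t + T -> Rabs (v s) <= V) ->
  Rabs (exp_window k (- T) 0 v t) <= T * V /\ Rabs (exp_window (- k) 0 T v t) <= T * V.
Proof.
  intros Hv HV; split.
  - replace (T * V) with ((0 - - T) * V) by ring.
    apply exp_window_bound; try nra; auto; intros s Hs; apply HV; lra.
  - replace (T * V) with ((T - 0) * V) by ring.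
    apply exp_window_bound; try nra; auto; intros s Hs; apply HV; lra.
Qed.

Lemma dgreen_bound (v : R -> R) V : (forall s, continuity_pt v s) ->
  (forall s, Rabs (v s) <= V) -> forall t, Rabs (dgreen k T v t) <= T * V / (1 - e).
Proof.
  intros Hv HV t; pose proof one_minus_exp_pos.
  destruct (exp_windows_bound v t V Hv (fun s _ => HV s)) as [HA HB].
  unfold dgreen; fold e; unfold Rdiv.
  rewrite Rabs_mult, Rabs_inv, (Rabs_pos_eq (2 * (1 - e))) by lra.
  apply Rle_trans with ((T * V + T * V) * / (2 * (1 - e))).
  - apply Rmult_le_compat_r; [left; apply Rinv_0_lt_compat; lra|].
    unfold Rminus; eapply Rle_trans; [apply Rabs_triang|]; rewrite Rabs_Ropp; lra.
  - right; field; lra.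
Qed.

Lemma green_dist (v1 v2 : R -> R) t V :
  (forall s, continuity_pt v1 s) -> (forall s, continuity_pt v2 s) ->
  (forall s, t - T <= s <= t + T -> Rabs (v1 s - v2 s) <= V) ->
  Rabs (green k T v1 t - green k T v2 t) <= T * V / (k * (1 - e)).
Proof.
  intros H1 H2 HV; pose proof one_minus_exp_pos.
  assert (Hd : forall s, continuity_pt (fun s => v1 s - v2 s) s)
    by (intro; apply continuity_pt_minus; auto).
  destruct (exp_windows_bound _ t V Hd HV) as [HA HB].
  rewrite !exp_window_minus in HA, HB by assumption.
  unfold green; fold e.
  replace (_ - _) with ((exp_window k (- T) 0 v1 t - exp_window k (- T) 0 v2 t +
     (exp_window (- k) 0 T v1 t - exp_window (- k) 0 T v2 t)) * / (2 * k * (1 - e)))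
    by (field; split; lra).
  rewrite Rabs_mult, Rabs_inv, (Rabs_pos_eq (2 * k * (1 - e))) by nra.
  apply Rle_trans with ((T * V + T * V) * / (2 * k * (1 - e))).
  - apply Rmult_le_compat_r; [left; apply Rinv_0_lt_compat; nra|].
    eapply Rle_trans; [apply Rabs_triang | lra].
  - right; field; lra.
Qed.

Lemma green_cvg (vs : nat -> R -> R) (w : R -> R) t :
  (forall j s, continuity_pt (vs j) s) -> (forall s, continuity_pt w s) ->
  (forall eps, 0 < eps -> exists J, forall j, (J <= j)%nat ->
     forall s, t - T <= s <= t + T -> Rabs (vs j s - w s) <= eps) ->
  is_lim_seq (fun j => green k T (vs j) t) (green k T w t).
Proof.
  intros Hvs Hw Hcvg; pose proof one_minus_exp_pos.
  apply is_lim_seq_spec; intros [eps Heps]; simpl.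
  set (C := T / (k * (1 - e))).
  assert (HC : 0 < C) by (apply Rdiv_lt_0_compat; nra).
  destruct (Hcvg (eps / (2 * C))) as [J HJ]; [apply Rdiv_lt_0_compat; lra|].
  exists J; intros j Hj.
  eapply Rle_lt_trans; [apply (green_dist _ _ t _ (Hvs j) Hw (HJ j Hj))|].
  replace (T * (eps / (2 * C)) / (k * (1 - e))) with (eps / 2) by (unfold C; field; nra).
  lra.
Qed.

End Green.

(** * Pointwise limits of equi-Lipschitz sequences *)

Lemma lipschitz_continuity_pt (phi : R -> R) L : 0 <= L ->
  (forall a b, Rabs (phi a - phi b) <= L * Rabs (a - b)) -> forall x, continuity_pt phi x.
Proof.
  intros HL Hlip x eps Heps; exists (eps / (L + 1)); split; [apply Rdiv_lt_0_compat; lra|].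
  intros y [_ Hy]; simpl in *; unfold R_dist in *.
  apply Rle_lt_trans with (L * Rabs (y - x)); [apply Hlip|].
  apply Rle_lt_trans with ((L + 1) * Rabs (y - x)); [pose proof (Rabs_pos (y - x)); nra|].
  replace eps with ((L + 1) * (eps / (L + 1))) by (field; lra).
  apply Rmult_lt_compat_l; lra.
Qed.

Lemma is_lim_seq_le_ev (u : nat -> R) (l c : R) N :
  is_lim_seq u l -> (forall m, (N <= m)%nat -> u m <= c) -> l <= c.
Proof.
  intros Hu Hle.
  apply (is_lim_seq_le_loc u (fun _ => c) l c); [exists N; assumption | assumption |].
  apply is_lim_seq_const.
Qed.

Lemma is_lim_seq_ge_ev (u : nat -> R) (l c : R) N :
  is_lim_seq u l -> (forall m, (N <= m)%nat -> c <= u m) -> c <= l.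
Proof.
  intros Hu Hle.
  apply (is_lim_seq_le_loc (fun _ => c) u c l); [exists N; assumption | | assumption].
  apply is_lim_seq_const.
Qed.

Section EquiLipschitz.
Variables (xs : nat -> R -> R) (xl : R -> R) (L : R).
Hypotheses (HL : 0 <= L) (Hlim : forall s, is_lim_seq (fun j => xs j s) (xl s))
  (Hlip : forall j s p, Rabs (xs j s - xs j p) <= L * Rabs (s - p)).

Lemma lim_lipschitz s p : Rabs (xl s - xl p) <= L * Rabs (s - p).
Proof.
  apply (is_lim_seq_le_ev (fun j => Rabs (xs j s - xs j p)) _ _ 0).
  - apply (is_lim_seq_abs _ (Finite (xl s - xl p))), is_lim_seq_minus'; apply Hlim.
  - intros; apply Hlip.
Qed.

(* Pointwise convergence at the points of a grid of mesh [h] propagates to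
   the whole interval, since all functions involved are [L]-Lipschitz. *)
Lemma lipschitz_cvg_uniform a b eps : 0 < eps -> exists J, forall j, (J <= j)%nat ->
  forall s, a <= s <= b -> Rabs (xs j s - xl s) <= eps.
Proof.
  intros Heps.
  set (h := eps / (4 * L + 1)).
  assert (Hh : 0 < h) by (apply Rdiv_lt_0_compat; lra).
  assert (HLh : 2 * L * h <= eps / 2).
  { unfold h; apply Rmult_le_reg_r with (4 * L + 1); [lra|].
    field_simplify; nra. }
  assert (Hnear : forall j s p, Rabs (s - p) <= h -> Rabs (xs j p - xl p) <= eps / 2 ->
             Rabs (xs j s - xl s) <= eps).
  { intros j s p Hsp Hp.
    pose proof (Hlip j s p) as Hs; pose proof (lim_lipschitz p s) as Hl.
    rewrite (Rabs_minus_sym p s) in Hl.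
    assert (L * Rabs (s - p) <= L * h) by (apply Rmult_le_compat_l; lra).
    replace (xs j s - xl s) with ((xs j s - xs j p) + (xs j p - xl p) + (xl p - xl s)) by ring.
    eapply Rle_trans; [apply Rabs_triang|].
    eapply Rle_trans; [apply Rplus_le_compat_r, Rabs_triang|].
    lra. }
  assert (Hpt : forall p, exists J, forall j, (J <= j)%nat -> Rabs (xs j p - xl p) <= eps / 2).
  { intro p; destruct (proj2 (is_lim_seq_spec _ _) (Hlim p) (mkposreal (eps / 2) ltac:(lra)))
      as [J HJ].
    exists J; intros j Hj; left; apply HJ, Hj. }
  assert (Hgrid : forall m, exists J, forall j, (J <= j)%nat ->
             forall s, a <= s <= a + INR m * h -> Rabs (xs j s - xl s) <= eps).
  { induction m as [|m [J1 HJ1]].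
    - destruct (Hpt a) as [J HJ]; exists J; intros j Hj s Hs; simpl in Hs.
      apply (Hnear j s a); [rewrite Rabs_right; lra | apply HJ, Hj].
    - destruct (Hpt (a + INR (S m) * h)) as [J2 HJ2]; exists (max J1 J2); intros j Hj s Hs.
      destruct (Rle_or_lt s (a + INR m * h)) as [Hs1|Hs1].
      + apply HJ1; [lia | lra].
      + apply (Hnear j s (a + INR (S m) * h)); [|apply HJ2; lia].
        rewrite S_INR in *; apply Rabs_le; split; lra. }
  destruct (INR_archimed h (b - a) Hh) as [m Hm].
  destruct (Hgrid m) as [J HJ]; exists J; intros j Hj s Hs; apply HJ; [assumption | lra].
Qed.

End EquiLipschitz.

(** * Lower and upper solutions *)

Section LowerUpperSolutions.
Variables (F : R -> R -> R) (T K : R) (al dal ddal be dbe ddbe : R -> R).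
Hypotheses (HT : 0 < T)
  (HF_per : forall t y, F (t + T) y = F t y)
  (HF_lip : forall t x y, Rabs (F t y - F t x) <= K * Rabs (y - x))
  (HF_cont : forall x : R -> R, (forall t, continuity_pt x t) ->
               forall t, continuity_pt (fun s => F s (x s)) t)
  (Hal : forall t, derivable_pt_lim al t (dal t))
  (Hdal : forall t, derivable_pt_lim dal t (ddal t)) (Hal_per : periodic T al)
  (Hbe : forall t, derivable_pt_lim be t (dbe t))
  (Hdbe : forall t, derivable_pt_lim dbe t (ddbe t)) (Hbe_per : periodic T be)
  (Hlower : forall t, F t (al t) <= ddal t) (Hupper : forall t, ddbe t <= F t (be t))
  (Hal_be : forall t, al t <= be t).

Let k := K + 1.
Let N (x : R -> R) (t : R) := k ^ 2 * x t - F t (x t).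
Let xs (j : nat) : R -> R := Nat.iter j (fun x => green k T (N x)) al.

Lemma lip_const_nonneg : 0 <= K.
Proof.
  pose proof (HF_lip 0 0 1); pose proof (Rabs_pos (F 0 1 - F 0 0)).
  rewrite Rminus_0_r, Rabs_R1 in *; lra.
Qed.

Lemma k_pos : 0 < k.
Proof. pose proof lip_const_nonneg; unfold k; lra. Qed.

Lemma N_mono (x y : R -> R) t : x t <= y t -> N x t <= N y t.
Proof.
  intro Hxy; pose proof lip_const_nonneg as HK; unfold N.
  pose proof (HF_lip t (x t) (y t)) as Hlip; apply Rabs_le_between in Hlip.
  rewrite Rabs_pos_eq in Hlip by lra; unfold k; nra.
Qed.

Lemma N_lipschitz (x y : R -> R) t : Rabs (N y t - N x t) <= (k ^ 2 + K) * Rabs (y t - x t).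
Proof.
  unfold N; replace (_ - (_ - _)) with (k ^ 2 * (y t - x t) - (F t (y t) - F t (x t))) by ring.
  eapply Rle_trans; [apply Rabs_triang|].
  rewrite Rabs_Ropp, Rabs_mult, (Rabs_pos_eq (k ^ 2)) by apply pow2_ge_0.
  pose proof (HF_lip t (x t) (y t)); lra.
Qed.

Lemma N_continuity (x : R -> R) : (forall t, continuity_pt x t) -> forall t, continuity_pt (N x) t.
Proof.
  intros Hx t; apply continuity_pt_minus; [|apply HF_cont, Hx].
  apply continuity_pt_mult; [apply continuity_pt_const; intros ? ?; reflexivity | apply Hx].
Qed.

Lemma N_periodic (x : R -> R) : periodic T x -> periodic T (N x).
Proof. intros Hx t; unfold N; rewrite Hx, HF_per; reflexivity. Qed.

Lemma iterate_regular j : (forall t, continuity_pt (xs j) t) /\ periodic T (xs j).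
Proof.
  induction j as [|j [Hc Hp]].
  - split; [apply (derivable_pt_lim_continuity al dal Hal) | exact Hal_per].
  - split.
    + apply (derivable_pt_lim_continuity _ (dgreen k T (N (xs j)))).
      apply (green_derive k T k_pos HT); [apply N_continuity | apply N_periodic]; assumption.
    + apply green_periodic; [apply N_continuity | apply N_periodic]; assumption.
Qed.

Lemma N_iterate_continuity j t : continuity_pt (N (xs j)) t.
Proof. apply N_continuity, iterate_regular. Qed.

Lemma N_iterate_periodic j : periodic T (N (xs j)).
Proof. apply N_periodic, iterate_regular. Qed.

Lemma iterate_derive j t : derivable_pt_lim (xs (S j)) t (dgreen k T (N (xs j)) t).
Proof.
  apply (green_derive k T k_pos HT (N (xs j)) (N_iterate_continuity j) (N_iterate_periodic j)).
Qed.

Lemma iterate_derive2 j t :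
  derivable_pt_lim (dgreen k T (N (xs j))) t (k ^ 2 * xs (S j) t - N (xs j) t).
Proof.
  apply (dgreen_derive k T k_pos HT (N (xs j)) (N_iterate_continuity j) (N_iterate_periodic j)).
Qed.

Lemma iterate_between j t : al t <= xs j t <= be t.
Proof.
  revert t; induction j as [|j IH]; intro t; [cbn; split; [lra | apply Hal_be]|].
  pose proof k_pos; split.
  - apply (green_ge k T k_pos HT (N (xs j)) (N_iterate_continuity j) (N_iterate_periodic j)
             al dal ddal); try assumption.
    intro s; pose proof (N_mono al (xs j) s (proj1 (IH s))) as HN; pose proof (Hlower s).
    unfold N in *; lra.
  - apply (green_le k T k_pos HT (N (xs j)) (N_iterate_continuity j) (N_iterate_periodic j)
             be dbe ddbe); try assumption.
    intro s; pose proof (N_mono (xs j) be s (proj2 (IH s))) as HN; pose proof (Hupper s).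
    unfold N in *; lra.
Qed.

Lemma iterate_increasing j t : xs j t <= xs (S j) t.
Proof.
  revert t; induction j as [|j IH]; intro t; [apply (iterate_between 1) |].
  pose proof k_pos.
  apply (green_ge k T k_pos HT (N (xs (S j))) (N_iterate_continuity (S j))
           (N_iterate_periodic (S j)) (xs (S j)) _ _ (proj2 (iterate_regular (S j)))
           (iterate_derive j) (iterate_derive2 j)).
  intro s; pose proof (N_mono (xs j) (xs (S j)) s (IH s)); lra.
Qed.

Lemma N_iterate_bounded : exists V, forall j t, Rabs (N (xs j) t) <= V.
Proof.
  destruct (periodic_bounded T al HT Hal_per (derivable_pt_lim_continuity al dal Hal)) as [Ma Ha].
  destruct (periodic_bounded T be HT Hbe_per (derivable_pt_lim_continuity be dbe Hbe)) as [Mb Hb].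
  destruct (periodic_bounded T (fun t => F t (al t)) HT)
    as [Mf Hf]; [intro t; rewrite HF_per, Hal_per; reflexivity |
                 apply HF_cont, (derivable_pt_lim_continuity al dal Hal) |].
  exists (k ^ 2 * (Ma + Mb) + Mf + K * (Ma + Mb)); intros j t.
  pose proof (iterate_between j t) as Hx; pose proof (Ha t) as Hat; pose proof (Hb t) as Hbt.
  pose proof (Hf t); pose proof (HF_lip t (al t) (xs j t)); pose proof lip_const_nonneg.
  apply Rabs_le_between in Hat; apply Rabs_le_between in Hbt.
  assert (Hxs : Rabs (xs j t) <= Ma + Mb) by (apply Rabs_le; lra).
  assert (Hd : Rabs (xs j t - al t) <= Ma + Mb) by (apply Rabs_le; lra).
  unfold N.
  replace (_ - _) with (k ^ 2 * xs j t - (F t (xs j t) - F t (al t)) - F t (al t)) by ring.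
  eapply Rle_trans; [apply Rabs_triang|]; rewrite Rabs_Ropp.
  eapply Rle_trans; [apply Rplus_le_compat_r, Rabs_triang|]; rewrite Rabs_Ropp, Rabs_mult,
    (Rabs_pos_eq (k ^ 2)) by apply pow2_ge_0.
  pose proof (pow2_ge_0 k); nra.
Qed.

Lemma iterate_equilipschitz :
  exists L, 0 <= L /\ forall j s p, Rabs (xs (S j) s - xs (S j) p) <= L * Rabs (s - p).
Proof.
  destruct N_iterate_bounded as [V HV].
  pose proof k_pos; pose proof (one_minus_exp_pos k T k_pos HT).
  assert (0 <= V) by (pose proof (HV O 0); pose proof (Rabs_pos (N (xs 0) 0)); lra).
  exists (T * V / (1 - exp (- (k * T)))); split; [apply Rdiv_le_0_compat; nra|].
  intros j s p.
  destruct (MVT_abs (xs (S j)) (dgreen k T (N (xs j))) p s) as [c [-> _]];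
    [intros; apply iterate_derive|].
  apply Rmult_le_compat_r; [apply Rabs_pos|].
  apply (dgreen_bound k T k_pos HT); [apply N_iterate_continuity | apply HV].
Qed.

Let xl (t : R) : R := real (Lim_seq (fun j => xs (S j) t)).

Lemma limit_is_lim t : is_lim_seq (fun j => xs (S j) t) (xl t).
Proof.
  apply Lim_seq_correct', (ex_finite_lim_seq_incr _ (be t)).
  - intro j; apply iterate_increasing.
  - intro j; apply iterate_between.
Qed.

Lemma limit_between t : al t <= xl t <= be t.
Proof.
  split; [apply (is_lim_seq_ge_ev _ _ _ O (limit_is_lim t)) |
          apply (is_lim_seq_le_ev _ _ _ O (limit_is_lim t))];
    intros; apply (iterate_between (S m)).
Qed.

Lemma limit_continuity t : continuity_pt xl t.
Proof.
  destruct iterate_equilipschitz as [L [HL Hlip]].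
  apply (lipschitz_continuity_pt xl L HL).
  intros; apply (lim_lipschitz (fun j => xs (S j)) xl L limit_is_lim Hlip).
Qed.

Lemma limit_periodic : periodic T xl.
Proof.
  intro t; unfold xl; f_equal; apply Lim_seq_ext; intro j; apply iterate_regular.
Qed.

Lemma limit_fixed t : xl t = green k T (N xl) t.
Proof.
  destruct iterate_equilipschitz as [L [HL Hlip]].
  pose proof lip_const_nonneg; pose proof k_pos.
  assert (Hc : 0 < k ^ 2 + K) by nra.
  assert (Hcvg : is_lim_seq (fun j => green k T (N (xs (S j))) t) (green k T (N xl) t)).
  { apply (green_cvg k T k_pos HT); [intros; apply N_iterate_continuity |
      apply N_continuity, limit_continuity |].
    intros eps Heps.
    destruct (lipschitz_cvg_uniform _ _ L HL limit_is_lim Hlip (t - T) (t + T) (eps / (k ^ 2 + K)))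
      as [J HJ]; [apply Rdiv_lt_0_compat; lra|].
    exists J; intros j Hj s Hs.
    eapply Rle_trans; [apply N_lipschitz|].
    apply Rle_trans with ((k ^ 2 + K) * (eps / (k ^ 2 + K))); [|right; field; lra].
    apply Rmult_le_compat_l; [lra | apply HJ; assumption]. }
  assert (Hshift : is_lim_seq (fun j => green k T (N (xs (S j))) t) (xl t))
    by apply (is_lim_seq_incr_1 (fun j => xs (S j) t)), limit_is_lim.
  pose proof (is_lim_seq_unique _ _ Hcvg) as E1; pose proof (is_lim_seq_unique _ _ Hshift) as E2.
  rewrite E1 in E2; injection E2; auto.
Qed.

Lemma lower_upper_solution :
  exists x, is_solution F x /\ periodic T x /\ forall t, al t <= x t <= be t.
Proof.
  assert (Hc := N_continuity xl limit_continuity); assert (Hp := N_periodic xl limit_periodic).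
  exists (green k T (N xl)); split; [|split].
  - exists (dgreen k T (N xl)); split; [apply (green_derive k T k_pos HT _ Hc Hp)|].
    intro t; pose proof (dgreen_derive k T k_pos HT _ Hc Hp t) as H.
    rewrite <- limit_fixed in *; unfold N in H at 2; replace (F t (xl t)) with
      (k ^ 2 * xl t - (k ^ 2 * xl t - F t (xl t))) by ring; exact H.
  - apply green_periodic; assumption.
  - intro t; rewrite <- limit_fixed; apply limit_between.
Qed.

End LowerUpperSolutions.

(** * The pendulum equation *)

Lemma sin_lipschitz x y : Rabs (sin y - sin x) <= Rabs (y - x).
Proof.
  destruct (MVT_abs sin cos x y) as [c [-> _]]; [intros; apply derivable_pt_lim_sin|].
  pose proof (Rabs_pos (y - x)).
  assert (Rabs (cos c) <= 1) by (apply Rabs_le, COS_bound); nra.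
Qed.

Lemma cos_lipschitz x y : Rabs (cos y - cos x) <= Rabs (y - x).
Proof.
  destruct (MVT_abs cos (fun c => - sin c) x y) as [c [-> _]];
    [intros; apply derivable_pt_lim_cos|].
  pose proof (Rabs_pos (y - x)).
  assert (Rabs (- sin c) <= 1) by (rewrite Rabs_Ropp; apply Rabs_le, SIN_bound); nra.
Qed.

Lemma sin_le_id x : 0 <= x -> sin x <= x.
Proof.
  intro Hx; pose proof (sin_lipschitz 0 x) as H.
  rewrite sin_0, !Rminus_0_r, (Rabs_pos_eq x) in H by lra.
  apply Rabs_le_between in H; lra.
Qed.

Lemma one_minus_cos_bound x : 0 <= 1 - cos x <= x * x / 2.
Proof.
  pose proof (cos_2a_sin (x / 2)) as E; replace (2 * (x / 2)) with x in E by field.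
  pose proof (sin_lipschitz 0 (x / 2)) as H; rewrite sin_0, !Rminus_0_r in H.
  assert (Rabs (x / 2) * Rabs (x / 2) = x / 2 * (x / 2))
    by (rewrite <- Rabs_mult; apply Rabs_pos_eq; nra).
  assert (Rabs (sin (x / 2)) * Rabs (sin (x / 2)) = sin (x / 2) * sin (x / 2))
    by (rewrite <- Rabs_mult; apply Rabs_pos_eq; nra).
  pose proof (Rabs_pos (sin (x / 2))); unfold Rsqr in E; split; nra.
Qed.

Lemma cos_dominates_near_0 Ma Mb th a b : 0 <= Ma -> 0 <= Mb -> 0 <= th ->
  th * (1 + Ma + Mb) <= 1 / 2 -> Rabs a <= Ma -> Rabs b <= Mb ->
  0 <= cos th - a * sin th - b * (1 - cos th).
Proof.
  intros HMa HMb Hth Hsmall Ha Hb.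
  apply Rabs_le_between in Ha; apply Rabs_le_between in Hb.
  pose proof PI2_1.
  assert (Hs : 0 <= sin th <= th) by (split; [apply sin_ge_0 | apply sin_le_id]; nra).
  pose proof (one_minus_cos_bound th).
  assert (a * sin th <= Ma * th) by nra.
  assert (b * (1 - cos th) <= Mb * (th * th / 2)) by nra.
  assert (th <= 1 / 2) by nra.
  assert ((1 + Mb) * (th * th) <= (1 + Mb) * th / 2) by nra.
  nra.
Qed.

Lemma derivable_pt_lim_const_plus (u : R -> R) c0 t l :
  derivable_pt_lim u t l -> derivable_pt_lim (fun s => c0 + u s) t l.
Proof.
  intro Hu; rewrite <- (Rplus_0_l l).
  apply (derivable_pt_lim_plus (fun _ => c0) u); [apply derivable_pt_lim_const | exact Hu].
Qed.

Lemma derivable_pt_lim_scaled_comp (phi dphi : R -> R) d r :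
  (forall u, derivable_pt_lim phi u (dphi u)) ->
  forall t, derivable_pt_lim (fun t => d * phi (r * t)) t (d * r * dphi (r * t)).
Proof.
  intros Hphi t; rewrite Rmult_assoc; apply derivable_pt_lim_scal.
  replace (r * dphi (r * t)) with (dphi (r * t) * r) by ring.
  apply (derivable_pt_lim_comp (fun t => r * t) phi); [|apply Hphi].
  apply is_derive_Reals; auto_derive; auto; ring.
Qed.

Section Pendulum.
Variables (f g H dH : R -> R) (T Mf Mg Mh : R) (n : nat).
Hypotheses (HT : 0 < T)
  (Hfc : forall t, continuity_pt f t) (Hgc : forall t, continuity_pt g t)
  (Hfp : periodic T f) (Hgp : periodic T g)
  (HMf : forall t, Rabs (f t) <= Mf) (HMg : forall t, Rabs (g t) <= Mg)
  (HH : forall u, derivable_pt_lim H u (dH u)) (HdH : forall u, derivable_pt_lim dH u (g u))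
  (HHp : periodic T H) (HMh : forall u, Rabs (H u) <= Mh).

Let r := INR n.
Let delta := / (4 * (1 + Mf + Mg)).
Hypotheses (Hn : 0 < r) (Hn_large : Mh <= r * r * delta / 2).

Let F t y := f t * sin y - (1 + g (r * t)) * cos y.
Let c := / (r * r).

Let al t := delta + - c * H (r * t).
Let be t := (PI - delta) + c * H (r * t).

Lemma delta_pos : 0 < delta <= 1 / 4 /\ delta * (1 + Mf + Mg) = 1 / 4.
Proof.
  pose proof (bound_nonneg f Mf HMf); pose proof (bound_nonneg g Mg HMg).
  assert (E : delta * (1 + Mf + Mg) = 1 / 4) by (unfold delta; field; lra).
  assert (0 < delta) by (unfold delta; apply Rinv_0_lt_compat; lra).
  repeat split; [lra | nra | exact E].
Qed.

Lemma correction_small t : Rabs (c * H (r * t)) <= delta / 2.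
Proof.
  pose proof (HMh (r * t)); pose proof (bound_nonneg H Mh HMh).
  assert (0 < c) by (apply Rinv_0_lt_compat; nra).
  rewrite Rabs_mult, (Rabs_pos_eq c) by lra.
  apply Rle_trans with (c * Mh); [apply Rmult_le_compat_l; lra|].
  apply Rle_trans with (c * (r * r * delta / 2)); [apply Rmult_le_compat_l; lra|].
  right; unfold c; field; lra.
Qed.

Lemma al_range t : delta / 2 <= al t <= 3 * delta / 2.
Proof. pose proof (correction_small t) as Hs; apply Rabs_le_between in Hs; unfold al; lra. Qed.

Lemma be_range t : delta / 2 <= PI - be t <= 3 * delta / 2.
Proof. pose proof (correction_small t) as Hs; apply Rabs_le_between in Hs; unfold be; lra. Qed.

Lemma fast_periodic (phi : R -> R) : periodic T phi -> forall t, phi (r * (t + T)) = phi (r * t).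
Proof.
  intros Hp t; replace (r * (t + T)) with (r * t + INR n * T) by (unfold r; ring).
  apply periodic_shift_nat, Hp.
Qed.

Lemma pendulum_lipschitz t x y : Rabs (F t y - F t x) <= (Mf + 1 + Mg) * Rabs (y - x).
Proof.
  unfold F.
  replace (_ - _) with (f t * (sin y - sin x) - (1 + g (r * t)) * (cos y - cos x)) by ring.
  eapply Rle_trans; [apply Rabs_triang|]; rewrite Rabs_Ropp, !Rabs_mult.
  pose proof (sin_lipschitz x y); pose proof (cos_lipschitz x y); pose proof (HMf t).
  assert (Rabs (1 + g (r * t)) <= 1 + Mg)
    by (eapply Rle_trans; [apply Rabs_triang | rewrite Rabs_R1; pose proof (HMg (r * t)); lra]).
  pose proof (Rabs_pos (f t)); pose proof (Rabs_pos (1 + g (r * t))).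
  pose proof (Rabs_pos (sin y - sin x)); pose proof (Rabs_pos (cos y - cos x)).
  nra.
Qed.

Lemma pendulum_continuity (x : R -> R) : (forall t, continuity_pt x t) ->
  forall t, continuity_pt (fun s => F s (x s)) t.
Proof.
  intros Hx t; unfold F.
  assert (Hgr : continuity_pt (fun s => g (r * s)) t).
  { apply (continuity_pt_comp (fun s => r * s) g); [|apply Hgc].
    apply continuity_pt_mult; [|apply continuity_pt_id].
    apply continuity_pt_const; intros ? ?; reflexivity. }
  apply continuity_pt_minus; apply continuity_pt_mult.
  - apply Hfc.
  - apply (continuity_pt_comp x sin); [apply Hx | apply continuity_sin].
  - apply continuity_pt_plus; [apply continuity_pt_const; intros ? ?; reflexivity | exact Hgr].
  - apply (continuity_pt_comp x cos); [apply Hx | apply continuity_cos].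
Qed.

Lemma pendulum_lower t : F t (al t) <= - c * r * r * g (r * t).
Proof.
  pose proof (bound_nonneg f Mf HMf); pose proof (bound_nonneg g Mg HMg); pose proof delta_pos.
  replace (- c * r * r) with (-1) by (unfold c; field; lra).
  pose proof (al_range t).
  assert (Hd : 0 <= cos (al t) - f t * sin (al t) - g (r * t) * (1 - cos (al t)))
    by (apply (cos_dominates_near_0 Mf Mg); auto; nra).
  unfold F; lra.
Qed.

Lemma pendulum_upper t : c * r * r * g (r * t) <= F t (be t).
Proof.
  pose proof (bound_nonneg f Mf HMf); pose proof (bound_nonneg g Mg HMg); pose proof delta_pos.
  replace (c * r * r) with 1 by (unfold c; field; lra).
  pose proof (be_range t).
  assert (Hf : Rabs (- f t) <= Mf) by (rewrite Rabs_Ropp; apply HMf).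
  assert (Hd : 0 <= cos (PI - be t) - - f t * sin (PI - be t) - g (r * t) * (1 - cos (PI - be t)))
    by (apply (cos_dominates_near_0 Mf Mg); auto; nra).
  unfold F; replace (be t) with (PI - (PI - be t)) by ring.
  rewrite sin_PI_x, Rtrigo_facts.cos_pi_minus; lra.
Qed.

Lemma pendulum_periodic_solution :
  exists x : R -> R, is_solution F x /\ periodic T x /\ (forall t, 0 < x t < PI).
Proof.
  destruct (lower_upper_solution F T (Mf + 1 + Mg) al (fun t => - c * r * dH (r * t))
              (fun t => - c * r * r * g (r * t)) be (fun t => c * r * dH (r * t))
              (fun t => c * r * r * g (r * t)))
    as [x [Hx [Hxp Hxr]]].
  - exact HT.
  - intros t y; unfold F; rewrite Hfp, (fast_periodic g Hgp); reflexivity.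
  - apply pendulum_lipschitz.
  - apply pendulum_continuity.
  - intro t; apply derivable_pt_lim_const_plus, derivable_pt_lim_scaled_comp, HH.
  - apply derivable_pt_lim_scaled_comp, HdH.
  - intro t; unfold al; rewrite (fast_periodic H HHp); reflexivity.
  - intro t; apply derivable_pt_lim_const_plus, derivable_pt_lim_scaled_comp, HH.
  - apply derivable_pt_lim_scaled_comp, HdH.
  - intro t; unfold be; rewrite (fast_periodic H HHp); reflexivity.
  - apply pendulum_lower.
  - apply pendulum_upper.
  - intro t; pose proof (al_range t); pose proof (be_range t); pose proof delta_pos.
    pose proof PI2_1; lra.
  - exists x; split; [exact Hx | split; [exact Hxp |]].
    intro t; pose proof (al_range t); pose proof (be_range t); pose proof delta_pos.
    specialize (Hxr t); lra.
Qed.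

End Pendulum.

Lemma smooth_continuity (phi : R -> R) : smooth phi -> forall t, continuity_pt phi t.
Proof.
  intros [D [HD0 HD]] t.
  apply (continuity_pt_ext (D O)); [intro; apply HD0|].
  apply (derivable_pt_lim_continuity (D O) (D 1%nat)); intro; apply HD.
Qed.

Theorem theorem3p8 (f g : R -> R) (T : R) :
  0 < T ->
  smooth f -> smooth g ->
  periodic T f -> periodic T g ->
  (exists pr : Riemann_integrable g 0 T, RiemannInt pr / T = 0) ->
  exists lambda0 : R,
    forall n : nat, lambda0 <= INR n ->
      exists x : R -> R,
        is_solution
          (fun t y => f t * sin y - (1 + g (INR n * t)) * cos y) x /\
        periodic T x /\
        (forall t, 0 < x t < PI).
Proof.
  intros HT Hsf Hsg Hfp Hgp [pr Hmean].
  pose proof (smooth_continuity f Hsf) as Hfc; pose proof (smooth_continuity g Hsg) as Hgc.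
  assert (Hg0 : RInt g 0 T = 0).
  { rewrite (RInt_Reals g 0 T pr).
    replace (RiemannInt pr) with (RiemannInt pr / T * T) by (field; lra).
    rewrite Hmean; apply Rmult_0_l. }
  destruct (periodic_bounded T f HT Hfp Hfc) as [Mf HMf].
  destruct (periodic_bounded T g HT Hgp Hgc) as [Mg HMg].
  destruct (periodic_second_primitive T g HT Hgc Hgp Hg0) as [H [dH [HH [HdH HHp]]]].
  destruct (periodic_bounded T H HT HHp (derivable_pt_lim_continuity H dH HH)) as [Mh HMh].
  pose proof (bound_nonneg f Mf HMf); pose proof (bound_nonneg g Mg HMg);
    pose proof (bound_nonneg H Mh HMh).
  set (delta := / (4 * (1 + Mf + Mg))).
  assert (Hdelta : 0 < delta) by (apply Rinv_0_lt_compat; lra).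
  exists (1 + 2 * Mh / delta); intros n Hn.
  assert (Hscale : 2 * Mh / delta * delta = 2 * Mh) by (field; lra).
  assert (0 <= 2 * Mh / delta) by (apply Rdiv_le_0_compat; lra).
  assert (2 * Mh <= INR n * delta) by nra.
  apply (pendulum_periodic_solution f g H dH T Mf Mg Mh n); auto; fold delta; nra.
Qed.
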